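(* Let $a,r$ be real numbers with $0<a<a+r<1$ and let $c=b_{\mathbb{D},2}(a,a+r)$. Then \[ \{z:|z-a|<r\}\subset B_{\mathbb{D},2}(a;c)\subset\{z:|z|<a+r\}. \]
   Context: $\mathbb{D}=\{z\in\mathbb{C}:|z|<1\}$. For $z_1,z_2\in\mathbb{D}$, $b_{\mathbb{D},2}(z_1,z_2)=\sup_{z\in\partial\mathbb{D}}\frac{|z_1-z_2|}{\sqrt{|z_1-z|^2+|z-z_2|^2}}$, and $B_{\mathbb{D},2}(a;c)=\{z\in\mathbb{D}: b_{\mathbb{D},2}(a,z)<c\}$. *)

From mathcomp Require Import all_boot all_order all_algebra.
From mathcomp Require Import all_classical all_reals.
From mathcomp Require Export complex.
Set Implicit Arguments. Unset Strict Implicit. Unset Printing Implicit Defensive.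
Import Order.TTheory GRing.Theory Num.Theory.
Local Open Scope ring_scope.
Local Open Scope classical_set_scope.

Definition cabs (R : realType) (z : R[i]) : R := ComplexField.Normc.normc z.

Definition unit_disk (R : realType) (z : R[i]) : Prop := cabs z < 1.

Definition bD2 (R : realType) (z1 z2 : R[i]) : R :=
  sup [set cabs (z1 - z2) / Num.sqrt (cabs (z1 - z) ^+ 2 + cabs (z - z2) ^+ 2)
      | z in [set z : R[i] | cabs z = 1]].

Definition BD2 (R : realType) (a : R[i]) (c : R) : set R[i] :=
  [set z | unit_disk z /\ bD2 a z < c].

From mathcomp Require Import all_boot all_order all_algebra.
From mathcomp Require Import all_classical all_reals.
From mathcomp Require Import complex.
From mathcomp Require Import ring lra.
Import Order.TTheory GRing.Theory Num.Theory.
Local Open Scope ring_scope.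
Local Open Scope classical_set_scope.
Local Open Scope complex_scope.

(* For |w| = 1 the parallelogram law gives
     |z1 - w|^2 + |w - z2|^2 = (|z1 + z2 - 2w|^2 + |z1 - z2|^2) / 2,
   and |z1 + z2 - 2w| >= 2 - |z1 + z2| with equality at w = (z1 + z2)/|z1 + z2|.
   Hence b(z1, z2) = d / sqrt(((2 - s)^2 + d^2) / 2) with d = |z1 - z2| and
   s = |z1 + z2|, an increasing function of d / (2 - s).  For real a and
   c = b(a, a + r) the ball B(a; c) is therefore cut out by
   |z - a| (2 - 2a - r) < r (2 - |a + z|), and both inclusions follow from the
   triangle inequalities |a + z| <= |z - a| + 2a and 2|z| <= |a + z| + |z - a|. *)

Lemma sup_eq_max (R : realType) (E : set R) (x : R) :
  E x -> ubound E x -> sup E = x.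
Proof.
move=> Ex ubx; apply/le_anti/andP; split; first by apply: ge_sup => //; exists x.
exact: (ub_le_sup (ex_intro _ x ubx)).
Qed.

Section DiskDistance.
Variable R : realType.
Implicit Types (z w : R[i]) (a r k d s : R).

Lemma cabs_ge0 z : 0 <= cabs z.
Proof. by case: z => x y; rewrite /cabs /= sqrtr_ge0. Qed.

Lemma cabs_sqr z : cabs z ^+ 2 = complex.Re z ^+ 2 + complex.Im z ^+ 2.
Proof. by case: z => x y; rewrite /cabs /= sqr_sqrtr // addr_ge0 // sqr_ge0. Qed.

Lemma cabs0 : cabs (0 : R[i]) = 0.
Proof. exact: ComplexField.Normc.normc0. Qed.

Lemma cabs1 : cabs (1 : R[i]) = 1.
Proof. exact: ComplexField.Normc.normc1. Qed.

Lemma cabs_eq0 z : (cabs z == 0) = (z == 0).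
Proof.
apply/eqP/eqP => [|->]; last exact: cabs0.
exact: ComplexField.Normc.eq0_normc.
Qed.

Lemma cabsN z : cabs (- z) = cabs z.
Proof. exact: normcN. Qed.

Lemma cabsM z w : cabs (z * w) = cabs z * cabs w.
Proof. exact: ComplexField.Normc.normcM. Qed.

Lemma cabsBC z w : cabs (z - w) = cabs (w - z).
Proof. by rewrite -opprB cabsN. Qed.

Lemma cabs_real k : cabs k%:C = `|k|.
Proof. by rewrite /cabs /= expr0n /= addr0 sqrtr_sqr. Qed.

Lemma cabs_real_ge0 k : 0 <= k -> cabs k%:C = k.
Proof. by move=> k0; rewrite cabs_real ger0_norm. Qed.

Lemma cabs_double w : cabs (w + w) = 2 * cabs w.
Proof. by rewrite -mulr2n /cabs normcMn mulr_natl. Qed.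

Lemma cabs_triangle z w : cabs (z + w) <= cabs z + cabs w.
Proof. exact: le_normcD. Qed.

Lemma sum_sqr_dist_median z1 z2 w :
  cabs (z1 - w) ^+ 2 + cabs (w - z2) ^+ 2 =
  (cabs (z1 + z2 - (w + w)) ^+ 2 + cabs (z1 - z2) ^+ 2) / 2.
Proof. by case: z1 z2 w => [x1 y1] [x2 y2] [u v]; rewrite !cabs_sqr /=; field. Qed.

Lemma cabs_sub_unit_double_ge z w :
  cabs w = 1 -> 2 - cabs z <= cabs (z - (w + w)).
Proof.
move=> w1; have := cabs_triangle z (- (z - (w + w))).
by rewrite opprB addrC subrK cabsBC cabs_double w1; lra.
Qed.

Lemma cabs_sub_unit_double_attained z : cabs z < 2 ->
  exists2 w, cabs w = 1 & cabs (z - (w + w)) = 2 - cabs z.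
Proof.
move=> z_lt2; have [z0|z_neq0] := eqVneq z 0.
  by exists 1; rewrite ?cabs1 // z0 sub0r cabsN cabs_double cabs1 cabs0 mulr1 subr0.
have z_gt0 : 0 < cabs z by rewrite lt_def cabs_eq0 z_neq0 cabs_ge0.
set k := (cabs z)^-1.
have k_gt0 : 0 < k by rewrite invr_gt0.
have zk : cabs z * k = 1 by rewrite mulfV ?gt_eqF.
exists (z * k%:C); first by rewrite cabsM cabs_real gtr0_norm.
have -> : z - (z * k%:C + z * k%:C) = z * (1 - k - k)%:C by rewrite !rmorphB /= rmorph1; ring.
rewrite cabsM cabs_real ler0_norm; last by nra.
have -> : cabs z * - (1 - k - k) = 2 * (cabs z * k) - cabs z by ring.
by rewrite zk mulr1.
Qed.

Definition bD2_ratio z1 z2 w : R :=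
  cabs (z1 - z2) / Num.sqrt (cabs (z1 - w) ^+ 2 + cabs (w - z2) ^+ 2).

Definition bD2_profile d s : R := d / Num.sqrt (((2 - s) ^+ 2 + d ^+ 2) / 2).

Lemma bD2_profile_denom_gt0 d s : s < 2 -> 0 < ((2 - s) ^+ 2 + d ^+ 2) / 2.
Proof. by move=> s_lt2; rewrite divr_gt0 // ltr_wpDr ?sqr_ge0 ?exprn_gt0 ?subr_gt0. Qed.

Lemma bD2_ratio_le_profile z1 z2 w : cabs (z1 + z2) < 2 -> cabs w = 1 ->
  bD2_ratio z1 z2 w <= bD2_profile (cabs (z1 - z2)) (cabs (z1 + z2)).
Proof.
rewrite /bD2_ratio /bD2_profile sum_sqr_dist_median.
set d := cabs (z1 - z2); set s := cabs (z1 + z2); move=> s_lt2 w1.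
have := cabs_sub_unit_double_ge (z1 + z2) _ w1; have := cabs_ge0 (z1 + z2 - (w + w)).
set t := cabs _ => t_ge0; rewrite -/s => t_ge.
have M_gt0 := bD2_profile_denom_gt0 d _ s_lt2.
have M_le : ((2 - s) ^+ 2 + d ^+ 2) / 2 <= (t ^+ 2 + d ^+ 2) / 2.
  by rewrite ler_pM2r ?invr_gt0 // lerD2r ler_pXn2r // ?nnegrE; lra.
have N_gt0 : 0 < ((t ^+ 2 + d ^+ 2) / 2) := lt_le_trans M_gt0 M_le.
apply: ler_wpM2l; first by rewrite /d cabs_ge0.
by rewrite lef_pV2 ?posrE ?sqrtr_gt0 // ler_sqrt // ltW.
Qed.

Lemma bD2E z1 z2 : cabs (z1 + z2) < 2 ->
  bD2 z1 z2 = bD2_profile (cabs (z1 - z2)) (cabs (z1 + z2)).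
Proof.
move=> s_lt2; apply: sup_eq_max.
  have [w w1 tw] := cabs_sub_unit_double_attained _ s_lt2.
  by exists w => //; rewrite sum_sqr_dist_median tw.
by move=> _ [w w1 <-]; exact: bD2_ratio_le_profile.
Qed.

Lemma bD2_profile_lt d s d' s' : 0 <= d -> 0 <= d' -> s < 2 -> s' < 2 ->
  (bD2_profile d s < bD2_profile d' s') = (d * (2 - s') < d' * (2 - s)).
Proof.
move=> d0 d'0 s_lt2 s'_lt2.
have M_gt0 := bD2_profile_denom_gt0 d _ s_lt2.
have M'_gt0 := bD2_profile_denom_gt0 d' _ s'_lt2.
have profile_ge0 e u : 0 <= e -> 0 <= bD2_profile e u.
  by move=> e0; rewrite divr_ge0 ?sqrtr_ge0.
rewrite -(ltr_pXn2r (n := 2)) ?nnegrE ?profile_ge0 //.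
have A_ge0 u : u < 2 -> 0 <= 2 - u by move=> u_lt2; rewrite subr_ge0 ltW.
rewrite -[RHS](ltr_pXn2r (n := 2)) ?nnegrE ?mulr_ge0 ?A_ge0 //.
rewrite /bD2_profile !expr_div_n !sqr_sqrtr ?ltW //.
rewrite ltr_pdivrMr // mulrAC ltr_pdivlMr //.
rewrite -[LHS]subr_gt0 -[RHS]subr_gt0.
have -> : d' ^+ 2 * (((2 - s) ^+ 2 + d ^+ 2) / 2) - d ^+ 2 * (((2 - s') ^+ 2 + d' ^+ 2) / 2)
    = ((d' * (2 - s)) ^+ 2 - (d * (2 - s')) ^+ 2) / 2 by field.
by rewrite pmulr_lgt0 ?invr_gt0.
Qed.

Lemma bD2_real_lt a r z : 0 <= a -> 0 <= r -> 2 * a + r < 2 -> cabs (a%:C + z) < 2 ->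
  (bD2 a%:C z < bD2 a%:C (a + r)%:C) =
  (cabs (z - a%:C) * (2 - (2 * a + r)) < r * (2 - cabs (a%:C + z))).
Proof.
move=> a0 r0 ar_lt2 z_lt2.
have sum : cabs (a%:C + (a + r)%:C) = 2 * a + r.
  rewrite -rmorphD cabs_real_ge0; first by ring.
  by rewrite addr_ge0 ?addr_ge0.
have diff : cabs (a%:C - (a + r)%:C) = r.
  by rewrite -rmorphB cabs_real opprD addrA subrr add0r normrN ger0_norm.
by rewrite !bD2E ?sum // diff bD2_profile_lt ?cabs_ge0 // cabsBC.
Qed.

Lemma ball_sub_BD2 a r : 0 <= a -> 0 < r -> a + r < 1 ->
  [set z | cabs (z - a%:C) < r] `<=` BD2 a%:C (bD2 a%:C (a + r)%:C).
Proof.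
move=> a0 r_gt0 ar_lt1 z /= zr.
have z_le : cabs z <= cabs (z - a%:C) + a.
  by have := cabs_triangle (z - a%:C) a%:C; rewrite subrK cabs_real_ge0.
have s_le : cabs (a%:C + z) <= cabs (z - a%:C) + 2 * a.
  have -> : a%:C + z = (z - a%:C) + (a%:C + a%:C) by ring.
  by apply: le_trans (cabs_triangle _ _) _; rewrite cabs_double cabs_real_ge0.
split; first by rewrite /unit_disk; lra.
have r_ge0 := ltW r_gt0; have s_lt2 : cabs (a%:C + z) < 2 by lra.
rewrite bD2_real_lt //; last by lra.
have : 0 < (r - cabs (z - a%:C)) * (1 - a) by apply: mulr_gt0; lra.
nra.
Qed.

Lemma BD2_sub_disk a r : 0 <= a -> 0 < r -> a + r < 1 ->
  BD2 a%:C (bD2 a%:C (a + r)%:C) `<=` [set z | cabs z < a + r].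
Proof.
move=> a0 r_gt0 ar_lt1 z [z_lt1 /=].
have r_ge0 := ltW r_gt0.
have s_lt2 : cabs (a%:C + z) < 2.
  by have := cabs_triangle a%:C z; rewrite cabs_real_ge0 //; move: z_lt1; rewrite /unit_disk; lra.
rewrite bD2_real_lt //; last by lra.
have z_le : cabs z <= cabs (z - a%:C) + a.
  by have := cabs_triangle (z - a%:C) a%:C; rewrite subrK cabs_real_ge0.
have z2_le : 2 * cabs z <= cabs (a%:C + z) + cabs (z - a%:C).
  rewrite -cabs_double.
  have -> : z + z = (a%:C + z) + (z - a%:C) by ring.
  exact: cabs_triangle.
set d := cabs (z - a%:C) in z_le z2_le *; set s := cabs (a%:C + z) in s_lt2 z2_le *.
move=> lt_ball; rewrite ltNge; apply/negP => z_ge.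
have : 0 <= (d - r) * (1 - a - r) by apply: mulr_ge0; lra.
have : 0 <= r * (s + d - 2 * cabs z) by apply: mulr_ge0; lra.
have : 0 <= r * (cabs z - (a + r)) by apply: mulr_ge0; lra.
nra.
Qed.

End DiskDistance.

Theorem theorem3p16 (R : realType) (a r : R) :
  0 < a -> a < a + r -> a + r < 1 ->
  let c := bD2 (a%:C)%C ((a + r)%:C)%C in
  [set z : R[i] | cabs (z - (a%:C)%C) < r] `<=` BD2 (a%:C)%C c /\
  BD2 (a%:C)%C c `<=` [set z : R[i] | cabs z < a + r].
Proof.
move=> a_gt0 ar_gt_a ar_lt1 c.
have a_ge0 := ltW a_gt0; have r_gt0 : 0 < r by lra.
by split; [apply: ball_sub_BD2 | apply: BD2_sub_disk].
Qed.
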